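(* Let $\mathcal C$ be a $G$-category and $(P,\phi)\colon\mathcal C\to\mathcal C/G$ the canonical functor. For every category $\mathcal C'$, the functor $(P,\phi)^*\colon\operatorname{Fun}(\mathcal C/G,\mathcal C')\to\operatorname{Inv}(\mathcal C,\mathcal C')$, sending a functor $H$ to $(HP,H\phi)$ and a natural transformation $\eta\colon H\to H'$ to $\eta P$, is an isomorphism of categories.
   Context: $\Bbbk$ is a commutative ring; all categories and functors are $\Bbbk$-linear; $G$ is a group. A $G$-category is a category $\mathcal C$ with a group homomorphism $A\colon G\to\operatorname{Aut}(\mathcal C)$; write $\alpha x=A_\alpha x$, $\alpha f=A_\alpha f$. An invariance adjuster of $F\colon\mathcal C\to\mathcal C'$ is a family of natural isomorphisms $\phi_\alpha\colon F\to FA_\alpha$ ($\alpha\in G$) with $\phi_1=\mathrm{id}$ and $(\phi_\beta A_\alpha)\phi_\alpha=\phi_{\beta\alpha}$; $(F,\phi)$ is a $G$-invariant functor. A morphism $(F,\phi)\to(F',\phi')$ is a natural transformation $\eta\colon F\to F'$ with $(\eta A_\alpha)\phi_\alpha=\phi'_\alpha\eta$ for all $\alpha$. $\operatorname{Inv}(\mathcal C,\mathcal C')$ is the category of $G$-invariant functors $\mathcal C\to\mathcal C'$ and their morphisms; $\operatorname{Fun}(\mathcal C/G,\mathcal C')$ is the category of functors and natural transformations. The orbit category $\mathcal C/G$: objects those of $\mathcal C$; morphisms $x\to y$ are row- and column-finite families $f=(f_{\beta,\alpha})_{(\alpha,\beta)\in G\times G}$, $f_{\beta,\alpha}\in\mathcal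 C(\alpha x,\beta y)$, with $f_{\gamma\beta,\gamma\alpha}=\gamma(f_{\beta,\alpha})$; composition $(gf)_{\beta,\alpha}=\sum_\gamma g_{\beta,\gamma}f_{\gamma,\alpha}$. The canonical functor: $Px=x$, $P(f)=(\delta_{\alpha,\beta}\alpha f)_{(\alpha,\beta)}$; $\phi_{\mu,x}=(\delta_{\alpha,\beta\mu}\mathrm{id}_{\alpha x})_{(\alpha,\beta)}\colon Px\to P\mu x$. *)

From HB Require Import structures.
From mathcomp Require Import all_boot all_algebra.
From mathcomp Require Import boolp classical_sets cardinality fsbigop.
From Stdlib Require Import FunctionalExtensionality ProofIrrelevance.

Set Implicit Arguments.
Unset Strict Implicit.
Unset Printing Implicit Defensive.

Import GRing.Theory.
Local Open Scope ring_scope.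

Record lincat (k : pzRingType) := LinCat {
  lob : Type;
  lhom : lob -> lob -> lmodType k;
  lidm : forall x, lhom x x;
  lcomp : forall x y z, lhom y z -> lhom x y -> lhom x z }.
Arguments lob {k} C : rename.
Arguments lhom {k} C x y : rename.
Arguments lidm {k} C x : rename.
Arguments lcomp {k C x y z} g f : rename.

Record lincat_laws (k : pzRingType) (C : lincat k) : Prop := LinCatLaws {
  comp1m : forall x y (f : lhom C x y), lcomp (lidm C y) f = f;
  compm1 : forall x y (f : lhom C x y), lcomp f (lidm C x) = f;
  compA : forall x y z w (h : lhom C z w) (g : lhom C y z) (f : lhom C x y),
    lcomp h (lcomp g f) = lcomp (lcomp h g) f;
  compDl : forall x y z (g1 g2 : lhom C y z) (f : lhom C x y),
    lcomp (g1 + g2) f = lcomp g1 f + lcomp g2 f;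
  compDr : forall x y z (g : lhom C y z) (f1 f2 : lhom C x y),
    lcomp g (f1 + f2) = lcomp g f1 + lcomp g f2;
  compZl : forall x y z (a : k) (g : lhom C y z) (f : lhom C x y),
    lcomp (a *: g) f = a *: lcomp g f;
  compZr : forall x y z (a : k) (g : lhom C y z) (f : lhom C x y),
    lcomp g (a *: f) = a *: lcomp g f }.

Definition hcast (k : pzRingType) (C : lincat k) (x x' y y' : lob C)
    (ex : x = x') (ey : y = y') (f : lhom C x y) : lhom C x' y' :=
  match ex in _ = x0, ey in _ = y0 return lhom C x0 y0 with
  | erefl, erefl => f end.

Record lfunctor (k : pzRingType) (C D : lincat k) := LFunctor {
  fob : lob C -> lob D;
  fhom : forall x y, lhom C x y -> lhom D (fob x) (fob y);
  fhom_id : forall x, fhom (lidm C x) = lidm D (fob x);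
  fhom_comp : forall x y z (g : lhom C y z) (f : lhom C x y),
    fhom (lcomp g f) = lcomp (fhom g) (fhom f);
  fhom_add : forall x y (f g : lhom C x y), fhom (f + g) = fhom f + fhom g;
  fhom_scale : forall x y (a : k) (f : lhom C x y),
    fhom (a *: f) = a *: fhom f }.
Arguments fob {k C D} F x : rename.
Arguments fhom {k C D} F {x y} f : rename.

Record ntrans (k : pzRingType) (C D : lincat k) (F G : lfunctor C D) :=
  NTrans {
  ncomp : forall x, lhom D (fob F x) (fob G x);
  nnat : forall x y (f : lhom C x y),
    lcomp (ncomp y) (fhom F f) = lcomp (fhom G f) (ncomp x) }.
Arguments ncomp {k C D F G} eta x : rename.

(* A G-category: a group homomorphism A : G -> Aut(C), i.e. A_1 = Id and
   A_(a b) = A_a A_b as functors (equality of functors = equality on objects,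
   and on morphisms up to the induced transport).  Each A_a is then an
   automorphism (with inverse A_(a^-1)). *)
Record gcat (k : pzRingType) (G : groupType) (C : lincat k) := GCat {
  act : G -> lfunctor C C;
  act1_ob : forall x, fob (act 1%g) x = x;
  actM_ob : forall (a b : G) x,
    fob (act (a * b)%g) x = fob (act a) (fob (act b) x);
  act1_hom : forall x y (f : lhom C x y),
    hcast (act1_ob x) (act1_ob y) (fhom (act 1%g) f) = f;
  actM_hom : forall (a b : G) x y (f : lhom C x y),
    hcast (actM_ob a b x) (actM_ob a b y) (fhom (act (a * b)%g) f)
    = fhom (act a) (fhom (act b) f) }.
Arguments act {k G C} A a : rename.
Arguments act1_ob {k G C} A x : rename.
Arguments actM_ob {k G C} A a b x : rename.

Record cat := Cat {
  cob : Type;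
  chom : cob -> cob -> Type;
  cid : forall x, chom x x;
  ccomp : forall x y z, chom y z -> chom x y -> chom x z }.
Arguments chom : clear implicits.
Arguments cid : clear implicits.
Arguments ccomp {C x y z} g f : rename.

Record functor (C D : cat) := Functor {
  Fob : cob C -> cob D;
  Fhom : forall x y, chom C x y -> chom D (Fob x) (Fob y);
  Fhom_id : forall x, Fhom (cid C x) = cid D (Fob x);
  Fhom_comp : forall x y z (g : chom C y z) (f : chom C x y),
    Fhom (ccomp g f) = ccomp (Fhom g) (Fhom f) }.
Arguments Fob {C D} F x : rename.
Arguments Fhom {C D} F {x y} f : rename.

Definition ccast (C : cat) (x x' y y' : cob C) (ex : x = x') (ey : y = y')
    (f : chom C x y) : chom C x' y' :=
  match ex in _ = x0, ey in _ = y0 return chom C x0 y0 with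
  | erefl, erefl => f end.

Definition functor_id (C : cat) : functor C C :=
  @Functor C C (fun x => x) (fun x y f => f) (fun x => erefl)
    (fun x y z g f => erefl).

Lemma functor_comp_id (C D E : cat) (F : functor D E) (G : functor C D) x :
  Fhom F (Fhom G (cid C x)) = cid E (Fob F (Fob G x)).
Proof. by rewrite !Fhom_id. Qed.

Lemma functor_comp_comp (C D E : cat) (F : functor D E) (G : functor C D)
  x y z (g : chom C y z) (f : chom C x y) :
  Fhom F (Fhom G (ccomp g f)) = ccomp (Fhom F (Fhom G g)) (Fhom F (Fhom G f)).
Proof. by rewrite !Fhom_comp. Qed.

Definition functor_comp (C D E : cat) (F : functor D E) (G : functor C D) :
    functor C E :=
  @Functor C E (fun x => Fob F (Fob G x)) (fun x y f => Fhom F (Fhom G f))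
    (functor_comp_id F G) (functor_comp_comp F G).

Definition functor_eq (C D : cat) (F F' : functor C D) : Prop :=
  exists e : forall x, Fob F x = Fob F' x,
    forall x y (f : chom C x y), ccast (e x) (e y) (Fhom F f) = Fhom F' f.

Definition cat_iso (C D : cat) (F : functor C D) : Prop :=
  exists F' : functor D C,
    functor_eq (functor_comp F' F) (functor_id C) /\
    functor_eq (functor_comp F F') (functor_id D).

Lemma ntrans_id_nat (k : pzRingType) (C D : lincat k) (hD : lincat_laws D)
  (F : lfunctor C D) x y (f : lhom C x y) :
  lcomp (lidm D (fob F y)) (fhom F f) = lcomp (fhom F f) (lidm D (fob F x)).
Proof. by rewrite comp1m // compm1. Qed.

Definition ntrans_id (k : pzRingType) (C D : lincat k) (hD : lincat_laws D)
  (F : lfunctor C D) : ntrans F F :=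
  @NTrans k C D F F (fun x => lidm D (fob F x)) (ntrans_id_nat hD F).

Lemma ntrans_comp_nat (k : pzRingType) (C D : lincat k) (hD : lincat_laws D)
  (F1 F2 F3 : lfunctor C D) (e2 : ntrans F2 F3) (e1 : ntrans F1 F2)
  x y (f : lhom C x y) :
  lcomp (lcomp (ncomp e2 y) (ncomp e1 y)) (fhom F1 f)
  = lcomp (fhom F3 f) (lcomp (ncomp e2 x) (ncomp e1 x)).
Proof. by rewrite -compA // nnat compA // nnat -compA. Qed.

Definition ntrans_comp (k : pzRingType) (C D : lincat k) (hD : lincat_laws D)
  (F1 F2 F3 : lfunctor C D) (e2 : ntrans F2 F3) (e1 : ntrans F1 F2) :
  ntrans F1 F3 :=
  @NTrans k C D F1 F3 (fun x => lcomp (ncomp e2 x) (ncomp e1 x))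
    (ntrans_comp_nat hD e2 e1).

Definition Funcat (k : pzRingType) (C D : lincat k) (hD : lincat_laws D) : cat :=
  @Cat (lfunctor C D) (@ntrans k C D) (ntrans_id hD)
    (fun F1 F2 F3 e2 e1 => ntrans_comp hD e2 e1).

Record invfun (k : pzRingType) (G : groupType) (C D : lincat k)
    (A : gcat G C) := InvFun {
  ifun : lfunctor C D;
  iadj : forall (a : G) x, lhom D (fob ifun x) (fob ifun (fob (act A a) x));
  iadj_nat : forall (a : G) x y (f : lhom C x y),
    lcomp (iadj a y) (fhom ifun f)
    = lcomp (fhom ifun (fhom (act A a) f)) (iadj a x);
  iadj_iso : forall (a : G) x,
    exists g : lhom D (fob ifun (fob (act A a) x)) (fob ifun x),
      lcomp g (iadj a x) = lidm D _ /\ lcomp (iadj a x) g = lidm D _;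
  iadj1 : forall x,
    hcast erefl (f_equal (fob ifun) (act1_ob A x)) (iadj 1%g x)
    = lidm D (fob ifun x);
  iadjM : forall (a b : G) x,
    hcast erefl (f_equal (fob ifun) (actM_ob A b a x)) (iadj (b * a)%g x)
    = lcomp (iadj b (fob (act A a) x)) (iadj a x) }.
Arguments ifun {k G C D A} F : rename.
Arguments iadj {k G C D A} F a x : rename.

Record invmor (k : pzRingType) (G : groupType) (C D : lincat k)
    (A : gcat G C) (F F' : invfun D A) := InvMor {
  imor : ntrans (ifun F) (ifun F');
  imor_adj : forall (a : G) x,
    lcomp (ncomp imor (fob (act A a) x)) (iadj F a x)
    = lcomp (iadj F' a x) (ncomp imor x) }.
Arguments imor {k G C D A F F'} m : rename.

Lemma invmor_id_adj (k : pzRingType) (G : groupType) (C D : lincat k)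
  (A : gcat G C) (hD : lincat_laws D) (F : invfun D A) (a : G) x :
  lcomp (ncomp (ntrans_id hD (ifun F)) (fob (act A a) x)) (iadj F a x)
  = lcomp (iadj F a x) (ncomp (ntrans_id hD (ifun F)) x).
Proof. by rewrite /= comp1m // compm1. Qed.

Definition invmor_id (k : pzRingType) (G : groupType) (C D : lincat k)
  (A : gcat G C) (hD : lincat_laws D) (F : invfun D A) : invmor F F :=
  @InvMor k G C D A F F (ntrans_id hD (ifun F)) (invmor_id_adj hD F).

Lemma invmor_comp_adj (k : pzRingType) (G : groupType) (C D : lincat k)
  (A : gcat G C) (hD : lincat_laws D) (F1 F2 F3 : invfun D A)
  (m2 : invmor F2 F3) (m1 : invmor F1 F2) (a : G) x :
  lcomp (ncomp (ntrans_comp hD (imor m2) (imor m1)) (fob (act A a) x))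
    (iadj F1 a x)
  = lcomp (iadj F3 a x) (ncomp (ntrans_comp hD (imor m2) (imor m1)) x).
Proof.
by rewrite /= -compA // imor_adj compA // imor_adj -compA.
Qed.

Definition invmor_comp (k : pzRingType) (G : groupType) (C D : lincat k)
  (A : gcat G C) (hD : lincat_laws D) (F1 F2 F3 : invfun D A)
  (m2 : invmor F2 F3) (m1 : invmor F1 F2) : invmor F1 F3 :=
  @InvMor k G C D A F1 F3 (ntrans_comp hD (imor m2) (imor m1))
    (invmor_comp_adj hD m2 m1).

Definition Invcat (k : pzRingType) (G : groupType) (C D : lincat k)
  (A : gcat G C) (hD : lincat_laws D) : cat :=
  @Cat (invfun D A) (@invmor k G C D A) (invmor_id hD)
    (fun F1 F2 F3 m2 m1 => invmor_comp hD m2 m1).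

Lemma hcast0 (k : pzRingType) (C : lincat k) (x x' y y' : lob C)
  (ex : x = x') (ey : y = y') : hcast ex ey 0 = 0.
Proof. by destruct ex, ey. Qed.

Lemma hcastD (k : pzRingType) (C : lincat k) (x x' y y' : lob C)
  (ex : x = x') (ey : y = y') (f g : lhom C x y) :
  hcast ex ey (f + g) = hcast ex ey f + hcast ex ey g.
Proof. by destruct ex, ey. Qed.

Lemma hcastN (k : pzRingType) (C : lincat k) (x x' y y' : lob C)
  (ex : x = x') (ey : y = y') (f : lhom C x y) :
  hcast ex ey (- f) = - hcast ex ey f.
Proof. by destruct ex, ey. Qed.

Lemma hcastZ (k : pzRingType) (C : lincat k) (x x' y y' : lob C)
  (ex : x = x') (ey : y = y') (a : k) (f : lhom C x y) :
  hcast ex ey (a *: f) = a *: hcast ex ey f.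
Proof. by destruct ex, ey. Qed.

Lemma fhom0 (k : pzRingType) (C D : lincat k) (F : lfunctor C D) x y :
  fhom F (0 : lhom C x y) = 0.
Proof. by apply: (@addrI _ (fhom F (0 : lhom C x y))); rewrite -fhom_add !addr0. Qed.

Lemma fhomN (k : pzRingType) (C D : lincat k) (F : lfunctor C D) x y
  (f : lhom C x y) : fhom F (- f) = - fhom F f.
Proof.
by apply: (@addrI _ (fhom F f)); rewrite -fhom_add !subrr fhom0.
Qed.

(* Families f = (f_{b,a}) with f_{b,a} in C(a x, b y); we write them as
   [fam a b] (source index a, target index b). *)
Definition ofamily (k : pzRingType) (G : groupType) (C : lincat k)
  (A : gcat G C) (x y : lob C) : Type :=
  forall a b : G, lhom C (fob (act A a) x) (fob (act A b) y).

Definition ofamily_ok (k : pzRingType) (G : groupType) (C : lincat k)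
  (A : gcat G C) (x y : lob C) (f : ofamily A x y) : Prop :=
  [/\ (forall a : G, finite_set [set b : G | f a b != 0]),
      (forall b : G, finite_set [set a : G | f a b != 0]) &
      (forall g a b : G,
        hcast (actM_ob A g a x) (actM_ob A g b y) (f (g * a)%g (g * b)%g)
        = fhom (act A g) (f a b))].

Record ohom (k : pzRingType) (G : groupType) (C : lincat k) (A : gcat G C)
    (x y : lob C) := OHom {
  ofam : ofamily A x y;
  ofam_ok : ofamily_ok ofam }.
Arguments ofam {k G C A x y} f a b : rename.

HB.instance Definition _ (k : pzRingType) (G : groupType) (C : lincat k)
  (A : gcat G C) (x y : lob C) := gen_eqMixin (ohom A x y).
HB.instance Definition _ (k : pzRingType) (G : groupType) (C : lincat k)
  (A : gcat G C) (x y : lob C) := gen_choiceMixin (ohom A x y).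

Lemma ohom_ext (k : pzRingType) (G : groupType) (C : lincat k) (A : gcat G C)
  (x y : lob C) (f g : ohom A x y) :
  (forall a b, ofam f a b = ofam g a b) -> f = g.
Proof.
case: f g => f fP [g gP] /= efg.
have E : f = g.
  by apply: functional_extensionality_dep => a;
     apply: functional_extensionality_dep => b; exact: efg.
by subst g; rewrite (proof_irrelevance _ fP gP).
Qed.

Lemma ofamily0_ok (k : pzRingType) (G : groupType) (C : lincat k)
  (A : gcat G C) (x y : lob C) :
  ofamily_ok (fun a b => 0 : lhom C (fob (act A a) x) (fob (act A b) y)).
Proof.
split.
- by move=> a; apply: sub_finite_set (finite_set0 G) => b /=; rewrite eqxx.
- by move=> b; apply: sub_finite_set (finite_set0 G) => a /=; rewrite eqxx.
- by move=> g a b; rewrite hcast0 fhom0.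
Qed.

Lemma ofamilyD_ok (k : pzRingType) (G : groupType) (C : lincat k)
  (A : gcat G C) (x y : lob C) (f g : ohom A x y) :
  ofamily_ok (fun a b => ofam f a b + ofam g a b).
Proof.
case: f g => f [f1 f2 f3] [g [g1 g2 g3]] /=; split.
- move=> a; apply: (@sub_finite_set _ _
    ([set b | f a b != 0] `|` [set b | g a b != 0])).
    move=> b /= fg; have [f0|fn0] := eqVneq (f a b) 0; last by left.
    by right; apply/negP => /eqP g0; move: fg; rewrite f0 g0 addr0 eqxx.
  by rewrite finite_setU; split.
- move=> b; apply: (@sub_finite_set _ _
    ([set a | f a b != 0] `|` [set a | g a b != 0])).
    move=> a /= fg; have [f0|fn0] := eqVneq (f a b) 0; last by left.
    by right; apply/negP => /eqP g0; move: fg; rewrite f0 g0 addr0 eqxx.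
  by rewrite finite_setU; split.
- by move=> h a b; rewrite hcastD fhom_add f3 g3.
Qed.

Lemma ofamilyN_ok (k : pzRingType) (G : groupType) (C : lincat k)
  (A : gcat G C) (x y : lob C) (f : ohom A x y) :
  ofamily_ok (fun a b => - ofam f a b).
Proof.
case: f => f [f1 f2 f3] /=; split.
- by move=> a; apply: sub_finite_set (f1 a) => b /=; rewrite oppr_eq0.
- by move=> b; apply: sub_finite_set (f2 b) => a /=; rewrite oppr_eq0.
- by move=> h a b; rewrite hcastN fhomN f3.
Qed.

Lemma ofamilyZ_ok (k : pzRingType) (G : groupType) (C : lincat k)
  (A : gcat G C) (x y : lob C) (c : k) (f : ohom A x y) :
  ofamily_ok (fun a b => c *: ofam f a b).
Proof.
case: f => f [f1 f2 f3] /=; split.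
- move=> a; apply: sub_finite_set (f1 a) => b /=.
  by apply: contraNN => /eqP ->; rewrite scaler0.
- move=> b; apply: sub_finite_set (f2 b) => a /=.
  by apply: contraNN => /eqP ->; rewrite scaler0.
- by move=> h a b; rewrite hcastZ fhom_scale f3.
Qed.

Definition ohom0 (k : pzRingType) (G : groupType) (C : lincat k)
  (A : gcat G C) (x y : lob C) : ohom A x y := OHom (ofamily0_ok A x y).
Definition ohomD (k : pzRingType) (G : groupType) (C : lincat k)
  (A : gcat G C) (x y : lob C) (f g : ohom A x y) : ohom A x y :=
  OHom (ofamilyD_ok f g).
Definition ohomN (k : pzRingType) (G : groupType) (C : lincat k)
  (A : gcat G C) (x y : lob C) (f : ohom A x y) : ohom A x y :=
  OHom (ofamilyN_ok f).
Definition ohomZ (k : pzRingType) (G : groupType) (C : lincat k)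
  (A : gcat G C) (x y : lob C) (c : k) (f : ohom A x y) : ohom A x y :=
  OHom (ofamilyZ_ok c f).

Lemma ohomA (k : pzRingType) (G : groupType) (C : lincat k)
  (A : gcat G C) (x y : lob C) : associative (@ohomD k G C A x y).
Proof. by move=> f g h; apply: ohom_ext => a b /=; rewrite addrA. Qed.
Lemma ohomC (k : pzRingType) (G : groupType) (C : lincat k)
  (A : gcat G C) (x y : lob C) : commutative (@ohomD k G C A x y).
Proof. by move=> f g; apply: ohom_ext => a b /=; rewrite addrC. Qed.
Lemma ohom0D (k : pzRingType) (G : groupType) (C : lincat k)
  (A : gcat G C) (x y : lob C) : left_id (ohom0 A x y) (@ohomD k G C A x y).
Proof. by move=> f; apply: ohom_ext => a b /=; rewrite add0r. Qed.
Lemma ohomND (k : pzRingType) (G : groupType) (C : lincat k)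
  (A : gcat G C) (x y : lob C) :
  left_inverse (ohom0 A x y) (@ohomN k G C A x y) (@ohomD k G C A x y).
Proof. by move=> f; apply: ohom_ext => a b /=; rewrite addNr. Qed.

HB.instance Definition _ (k : pzRingType) (G : groupType) (C : lincat k)
  (A : gcat G C) (x y : lob C) :=
  GRing.isZmodule.Build (ohom A x y) (@ohomA k G C A x y) (@ohomC k G C A x y)
    (@ohom0D k G C A x y) (@ohomND k G C A x y).

Lemma ohomZA (k : pzRingType) (G : groupType) (C : lincat k)
  (A : gcat G C) (x y : lob C) (a b : k) (f : ohom A x y) :
  ohomZ a (ohomZ b f) = ohomZ (a * b) f.
Proof. by apply: ohom_ext => u v /=; rewrite scalerA. Qed.
Lemma ohomZ1 (k : pzRingType) (G : groupType) (C : lincat k)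
  (A : gcat G C) (x y : lob C) : left_id 1 (@ohomZ k G C A x y).
Proof. by move=> f; apply: ohom_ext => u v /=; rewrite scale1r. Qed.
Lemma ohomZDr (k : pzRingType) (G : groupType) (C : lincat k)
  (A : gcat G C) (x y : lob C) :
  right_distributive (@ohomZ k G C A x y) +%R.
Proof. by move=> c f g; apply: ohom_ext => u v /=; rewrite scalerDr. Qed.
Lemma ohomZDl (k : pzRingType) (G : groupType) (C : lincat k)
  (A : gcat G C) (x y : lob C) (f : ohom A x y) :
  {morph (@ohomZ k G C A x y)^~ f : a b / a + b}.
Proof. by move=> a b; apply: ohom_ext => u v /=; rewrite scalerDl. Qed.

HB.instance Definition _ (k : pzRingType) (G : groupType) (C : lincat k)
  (A : gcat G C) (x y : lob C) :=
  GRing.Zmodule_isLmodule.Build k (ohom A x y) (@ohomZA k G C A x y)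
    (@ohomZ1 k G C A x y) (@ohomZDr k G C A x y) (@ohomZDl k G C A x y).

(* For the families used below
   (P f, phi, composites) the conditions hold whenever C is a k-linear
   G-category; the default value 0 is only a totalization device. *)
Definition to_ohom (k : pzRingType) (G : groupType) (C : lincat k)
  (A : gcat G C) (x y : lob C) (f : ofamily A x y) : ohom A x y :=
  match pselect (ofamily_ok f) with
  | left p => OHom p
  | right _ => 0
  end.

Definition ocomp (k : pzRingType) (G : groupType) (C : lincat k)
  (A : gcat G C) (x y z : lob C) (g : ohom A y z) (f : ohom A x y) :
  ohom A x z :=
  to_ohom (fun a b => \sum_(c \in [set: G]) lcomp (ofam g c b) (ofam f a c)).

Definition Pfam (k : pzRingType) (G : groupType) (C : lincat k)
  (A : gcat G C) (x y : lob C) (f : lhom C x y) : ofamily A x y :=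
  fun a b =>
    match a =P b with
    | ReflectT e =>
        hcast erefl (f_equal (fun c => fob (act A c) y) e) (fhom (act A a) f)
    | ReflectF _ => 0
    end.

Definition Pmor (k : pzRingType) (G : groupType) (C : lincat k)
  (A : gcat G C) (x y : lob C) (f : lhom C x y) : ohom A x y :=
  to_ohom (Pfam A f).

Definition phifam (k : pzRingType) (G : groupType) (C : lincat k)
  (A : gcat G C) (mu : G) (x : lob C) : ofamily A x (fob (act A mu) x) :=
  fun a b =>
    match a =P (b * mu)%g with
    | ReflectT e =>
        hcast erefl
          (etrans (f_equal (fun c => fob (act A c) x) e) (actM_ob A b mu x))
          (lidm C (fob (act A a) x))
    | ReflectF _ => 0
    end.

Definition phican (k : pzRingType) (G : groupType) (C : lincat k)
  (A : gcat G C) (mu : G) (x : lob C) : ohom A x (fob (act A mu) x) :=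
  to_ohom (phifam A mu x).

Definition orbit_cat (k : pzRingType) (G : groupType) (C : lincat k)
  (A : gcat G C) : lincat k :=
  @LinCat k (lob C) (fun x y => ohom A x y : lmodType k)
    (fun x => Pmor A (lidm C x)) (@ocomp k G C A).

From Pilot Require Import Defs.
From HB Require Import structures.
From mathcomp Require Import all_boot all_algebra.
From mathcomp Require Import finmap boolp classical_sets cardinality fsbigop.
From Stdlib Require Import FunctionalExtensionality ProofIrrelevance.

(* A morphism f : x -> y of C/G is determined by its row (f_(b,1))_b, and
     f = \sum_b phi_(b,y)^-1 . P(f_(b,1)) . phi_(1,x),
   so a functor H on C/G is determined by (H P, H phi).  Conversely a
   G-invariant functor (F, phi) extends to C/G by
     f |-> \sum_b phi_(b,y)^-1 . F(f_(b,1)) . phi_(1,x).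
   Equivariance f_(g b, g a) = g f_(b,a) together with the cocycle identity
   for phi shows that any row a may be used in place of 1, and this is what
   makes the extension compatible with composition.  The two constructions
   are inverse to each other on the nose. *)

Set Implicit Arguments.
Unset Strict Implicit.
Unset Printing Implicit Defensive.
Import GRing.Theory.
Local Open Scope ring_scope.
Local Open Scope classical_set_scope.

Section Transport.
Variables (k : pzRingType) (C : lincat k).

Lemma hcast_pi (x x' y y' : lob C) (p p' : x = x') (q q' : y = y')
  (f : lhom C x y) : hcast p q f = hcast p' q' f.
Proof. by rewrite (proof_irrelevance _ p p') (proof_irrelevance _ q q'). Qed.

Lemma hcast_id (x y : lob C) (p : x = x) (q : y = y) (f : lhom C x y) :
  hcast p q f = f.
Proof. exact: (hcast_pi p erefl q erefl). Qed.

Lemma hcast_trans (x x' x'' y y' y'' : lob C) (p : x' = x'') (q : y' = y'')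
  (p' : x = x') (q' : y = y') (f : lhom C x y) :
  hcast p q (hcast p' q' f) = hcast (etrans p' p) (etrans q' q) f.
Proof. by destruct p, q, p', q'. Qed.

Lemma hcast_lcomp (x x' y y' z z' : lob C) (p : x = x') (q : y = y')
  (r : z = z') (g : lhom C y z) (f : lhom C x y) :
  hcast p r (lcomp g f) = lcomp (hcast q r g) (hcast p q f).
Proof. by destruct p, q, r. Qed.

Definition idcast (x y : lob C) (e : x = y) : lhom C x y :=
  hcast erefl e (lidm C x).

Lemma idcast_pi (x y : lob C) (e e' : x = y) : idcast e = idcast e'.
Proof. by rewrite (proof_irrelevance _ e e'). Qed.

Lemma idcast_id (x : lob C) (e : x = x) : idcast e = lidm C x.
Proof. exact: hcast_id. Qed.

Lemma hcast_idcast (x x' y y' : lob C) (p : x = x') (q : y = y') (e : x = y) :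
  hcast p q (idcast e) = idcast (etrans (etrans (esym p) e) q).
Proof. by destruct p, q, e. Qed.

Hypothesis hC : lincat_laws C.

Lemma comp_idcastl (x y z : lob C) (e : y = z) (f : lhom C x y) :
  lcomp (idcast e) f = hcast erefl e f.
Proof. by destruct e; rewrite /idcast /= comp1m. Qed.

Lemma comp_idcastr (x y z : lob C) (e : x = y) (f : lhom C y z) :
  lcomp f (idcast e) = hcast (esym e) erefl f.
Proof. by destruct e; rewrite /idcast /= compm1. Qed.

Lemma idcast_comp (x y z : lob C) (e : y = z) (e' : x = y) :
  lcomp (idcast e) (idcast e') = idcast (etrans e' e).
Proof. by destruct e, e'; rewrite /idcast /= comp1m. Qed.

Lemma comp0m (x y z : lob C) (f : lhom C x y) : lcomp (0 : lhom C y z) f = 0.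
Proof. by apply: (@addrI _ (lcomp 0 f)); rewrite -compDl // !addr0. Qed.

Lemma compm0 (x y z : lob C) (g : lhom C y z) : lcomp g (0 : lhom C x y) = 0.
Proof. by apply: (@addrI _ (lcomp g 0)); rewrite -compDr // !addr0. Qed.

Lemma comp_neq0 (x y z : lob C) (g : lhom C y z) (f : lhom C x y) :
  lcomp g f != 0 -> g != 0 /\ f != 0.
Proof.
have [->|] := eqVneq g 0; first by rewrite comp0m eqxx.
by have [->|//] := eqVneq f 0; rewrite compm0 eqxx.
Qed.

Lemma linv_rinv_eq (x y : lob C) (p : lhom C x y) (i j : lhom C y x) :
  lcomp i p = lidm C x -> lcomp p j = lidm C y -> i = j.
Proof. by move=> ip pj; rewrite -[i](compm1 hC) -pj Defs.compA // ip comp1m. Qed.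

End Transport.

Lemma fhom_hcast (k : pzRingType) (C D : lincat k) (F : lfunctor C D)
  (x x' y y' : lob C) (p : x = x') (q : y = y') (f : lhom C x y) :
  fhom F (hcast p q f) = hcast (f_equal (fob F) p) (f_equal (fob F) q) (fhom F f).
Proof. by destruct p, q. Qed.

Lemma fhom_idcast (k : pzRingType) (C D : lincat k) (F : lfunctor C D)
  (x y : lob C) (e : x = y) : fhom F (idcast e) = idcast (f_equal (fob F) e).
Proof. by destruct e; rewrite /idcast /= fhom_id. Qed.

Section FinSupportSums.
Variable T : choiceType.
Implicit Type S : set T.

Definition supp (V : zmodType) (F : T -> V) : set T := [set i | F i != 0].

Lemma fsum_neq0 (V : zmodType) (F : T -> V) :
  \sum_(i \in [set: T]) F i != 0 -> exists i, F i != 0.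
Proof. by case/(fsbigN1 (f := fun _ : unit => F) (x := tt)) => i; exists i. Qed.

Lemma fsumT_sub (V : zmodType) (F : T -> V) S :
  finite_set S -> supp F `<=` S ->
  \sum_(i \in [set: T]) F i = \sum_(i <- fset_set S) F i.
Proof.
move=> finS sFS; apply: fsbigTE => i; rewrite in_fset_set // => /negP nSi.
by apply/eqP/negPn/negP => /sFS Si; apply: nSi; rewrite inE.
Qed.

Lemma fsum_morph (V W : zmodType) (phi : V -> W) (F : T -> V) :
  phi 0 = 0 -> {morph phi : u v / u + v} -> finite_set (supp F) ->
  phi (\sum_(i \in [set: T]) F i) = \sum_(i \in [set: T]) phi (F i).
Proof.
move=> phi0 phiD finF.
rewrite (@fsumT_sub _ F _ finF) // (@fsumT_sub _ (phi \o F) _ finF); last first.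
  by move=> i; rewrite /supp /=; apply: contraNN => /eqP ->; rewrite phi0.
exact: big_morph.
Qed.

Lemma fsumD (V : zmodType) (F F' : T -> V) :
  finite_set (supp F) -> finite_set (supp F') ->
  \sum_(i \in [set: T]) (F i + F' i)
  = \sum_(i \in [set: T]) F i + \sum_(i \in [set: T]) F' i.
Proof.
move=> finF finF'; have finU : finite_set (supp F `|` supp F').
  by rewrite finite_setU.
have sFU : supp F `<=` supp F `|` supp F' by move=> i; left.
have sF'U : supp F' `<=` supp F `|` supp F' by move=> i; right.
have sDU : supp (fun i => F i + F' i) `<=` supp F `|` supp F'.
  move=> i; rewrite /supp /=; case: (eqVneq (F i) 0) => [->|]; last by left.
  by rewrite add0r; right.
rewrite (fsumT_sub finU sDU) (fsumT_sub finU sFU) (fsumT_sub finU sF'U).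
exact: big_split.
Qed.

Lemma fsum_single (V : zmodType) (F : T -> V) (i0 : T) :
  (forall i, i != i0 -> F i = 0) ->
  \sum_(i \in [set: T]) F i = F i0.
Proof.
move=> F0; rewrite -(fsbig_widen [set i0]) ?fsbig_set1 // => i [_ /eqP ne].
exact: F0.
Qed.

Lemma fsum_exchange (V : zmodType) (F : T -> T -> V) S S' :
  finite_set S -> finite_set S' ->
  (forall i j, F i j != 0 -> S i /\ S' j) ->
  \sum_(i \in [set: T]) \sum_(j \in [set: T]) F i j
  = \sum_(j \in [set: T]) \sum_(i \in [set: T]) F i j.
Proof.
move=> finS finS' FS.
have widen (U : set T) (H : T -> V) : (forall i, H i != 0 -> U i) ->
    \sum_(i \in U) H i = \sum_(i \in [set: T]) H i.
  move=> HU; apply: fsbig_widen => // i [_ Ui] /=.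
  by apply/eqP; apply: contra_notT Ui => /HU.
rewrite -(widen S) => [|i /fsum_neq0 [j /FS []//]].
rewrite -[RHS](widen S') => [|j /fsum_neq0 [i /FS []//]].
under eq_fsbigr do rewrite -(widen S') => [|j /FS []//].
under [RHS]eq_fsbigr do rewrite -(widen S) => [|i /FS []//].
exact: exchange_fsbig.
Qed.

End FinSupportSums.

Lemma fsum_reindex (G : groupType) (V : zmodType) (F : G -> V) (g : G) :
  \sum_(c \in [set: G]) F c = \sum_(c \in [set: G]) F (g * c)%g.
Proof.
apply: (reindex_fsbigT (fun c => g * c)%g F).
by exists (fun c => g^-1 * c)%g => c /=; rewrite ?mulKg ?mulVKg.
Qed.

Lemma finite_set_single (T : choiceType) (P : set T) (i0 : T) :
  (forall i, i != i0 -> ~ P i) -> finite_set P.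
Proof.
move=> P0; apply: sub_finite_set (finite_set1 i0) => i Pi.
by have [//|/P0] := eqVneq i i0.
Qed.

Section CompositionSums.
Variables (k : pzRingType) (C : lincat k) (hC : lincat_laws C) (T : choiceType).

Lemma comp_fsuml (x y z : lob C) (F : T -> lhom C y z) (f : lhom C x y) :
  finite_set (supp F) ->
  lcomp (\sum_(i \in [set: T]) F i) f = \sum_(i \in [set: T]) lcomp (F i) f.
Proof.
by apply: (fsum_morph (phi := lcomp^~ f)) => [|g g'] /=; rewrite ?comp0m ?compDl.
Qed.

Lemma comp_fsumr (x y z : lob C) (g : lhom C y z) (F : T -> lhom C x y) :
  finite_set (supp F) ->
  lcomp g (\sum_(i \in [set: T]) F i) = \sum_(i \in [set: T]) lcomp g (F i).
Proof.
by apply: (fsum_morph (phi := lcomp g)) => [|f f'] /=; rewrite ?compm0 ?compDr.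
Qed.

End CompositionSums.

Section Extensionality.
Variables (k : pzRingType) (C D : lincat k).

Lemma ntrans_ext (F F' : lfunctor C D) (m m' : ntrans F F') :
  (forall x, ncomp m x = ncomp m' x) -> m = m'.
Proof.
case: m m' => c p [c' p'] /= E.
have Ec : c = c' by apply: functional_extensionality_dep.
by subst c'; rewrite (proof_irrelevance _ p p').
Qed.

Lemma lfunctor_ext (F F' : lfunctor C D) (eob : forall x, fob F x = fob F' x) :
  (forall x y (f : lhom C x y), hcast (eob x) (eob y) (fhom F f) = fhom F' f) ->
  F = F'.
Proof.
case: F F' eob => fo fh p1 p2 p3 p4 [fo' fh' q1 q2 q3 q4] /= eob Ehom.
have Efo : fo = fo' by apply: functional_extensionality_dep.
subst fo'; have Efh : fh = fh'.
  do 3![apply: functional_extensionality_dep => ?].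
  by rewrite -Ehom hcast_id.
subst fh'; by rewrite (proof_irrelevance _ p1 q1) (proof_irrelevance _ p2 q2)
  (proof_irrelevance _ p3 q3) (proof_irrelevance _ p4 q4).
Qed.

Lemma ccast_ncomp (hD : lincat_laws D) (F1 F2 F1' F2' : lfunctor C D)
  (e1 : F1 = F1') (e2 : F2 = F2') (m : ntrans F1 F2) x :
  ncomp (@ccast (Funcat C hD) _ _ _ _ e1 e2 m) x
  = hcast (f_equal (fob^~ x) e1) (f_equal (fob^~ x) e2) (ncomp m x).
Proof. by destruct e1, e2. Qed.

Variables (G : groupType) (A : gcat G C).

Lemma invmor_ext (F F' : invfun D A) (m m' : invmor F F') :
  (forall x, ncomp (imor m) x = ncomp (imor m') x) -> m = m'.
Proof.
case: m m' => c p [c' p'] /= E.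
have Ec : c = c' by apply: ntrans_ext.
by subst c'; rewrite (proof_irrelevance _ p p').
Qed.

Lemma invfun_ext (F F' : invfun D A)
  (eob : forall x, fob (ifun F) x = fob (ifun F') x) :
  (forall x y (f : lhom C x y),
     hcast (eob x) (eob y) (fhom (ifun F) f) = fhom (ifun F') f) ->
  (forall (a : G) x,
     hcast (eob x) (eob (fob (act A a) x)) (iadj F a x) = iadj F' a x) ->
  F = F'.
Proof.
case: F F' eob => L ia p1 p2 p3 p4 [L' ia' q1 q2 q3 q4] /= eob Ehom Eadj.
have EL := lfunctor_ext Ehom; subst L'.
have Eia : ia = ia'.
  do 2![apply: functional_extensionality_dep => ?].
  by rewrite -Eadj hcast_id.
subst ia'; by rewrite (proof_irrelevance _ p1 q1) (proof_irrelevance _ p2 q2)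
  (proof_irrelevance _ p3 q3) (proof_irrelevance _ p4 q4).
Qed.

Lemma ccast_imor (hD : lincat_laws D) (F1 F2 F1' F2' : invfun D A)
  (e1 : F1 = F1') (e2 : F2 = F2') (m : invmor F1 F2) x :
  ncomp (imor (@ccast (Invcat A hD) _ _ _ _ e1 e2 m)) x
  = hcast (f_equal (fun F => fob (ifun F) x) e1)
          (f_equal (fun F => fob (ifun F) x) e2) (ncomp (imor m) x).
Proof. by destruct e1, e2. Qed.

End Extensionality.

Section OrbitFamilies.
Variables (k : pzRingType) (G : groupType) (C : lincat k) (A : gcat G C).
Implicit Types x y z : lob C.

Lemma ofam_to_ohom x y (f : ofamily A x y) : ofamily_ok f -> ofam (to_ohom f) = f.
Proof. by rewrite /to_ohom; case: pselect. Qed.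

Lemma ofam_fin_row x y (f : ohom A x y) a : finite_set [set b | ofam f a b != 0].
Proof. by case: f => f []. Qed.

Lemma ofam_fin_col x y (f : ohom A x y) b : finite_set [set a | ofam f a b != 0].
Proof. by case: f => f []. Qed.

Lemma ofam_equiv x y (f : ohom A x y) g a b :
  hcast (actM_ob A g a x) (actM_ob A g b y) (ofam f (g * a)%g (g * b)%g)
  = fhom (act A g) (ofam f a b).
Proof. by case: f => f []. Qed.

Lemma ofam_shift x y (f : ohom A x y) g a b u v :
  u = (g * a)%g -> v = (g * b)%g ->
  exists p q, ofam f u v = hcast p q (fhom (act A g) (ofam f a b)).
Proof.
move=> -> ->; exists (esym (actM_ob A g a x)), (esym (actM_ob A g b y)).
by rewrite -ofam_equiv hcast_trans hcast_id.
Qed.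

Lemma Pfam_diag x y (f : lhom C x y) a : Pfam A f a a = fhom (act A a) f.
Proof. by rewrite /Pfam; case: eqP => // e; rewrite hcast_id. Qed.

Lemma Pfam_offdiag x y (f : lhom C x y) a b : a != b -> Pfam A f a b = 0.
Proof. by rewrite /Pfam; case: eqP. Qed.

Lemma Pfam_ok x y (f : lhom C x y) : ofamily_ok (Pfam A f).
Proof.
split=> [a|b|g a b].
- apply: (finite_set_single (i0 := a)) => b ne /=.
  by rewrite Pfam_offdiag 1?eq_sym ?eqxx.
- by apply: (finite_set_single (i0 := b)) => a ne /=; rewrite Pfam_offdiag ?eqxx.
- have [<-|ne] := eqVneq a b; first by rewrite !Pfam_diag actM_hom.
  by rewrite !Pfam_offdiag ?hcast0 ?fhom0 // (can_eq (mulKg g)).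
Qed.

Lemma ofam_Pmor x y (f : lhom C x y) : ofam (Pmor A f) = Pfam A f.
Proof. exact/ofam_to_ohom/Pfam_ok. Qed.

Lemma phifam_idcast (mu : G) x a b : a = (b * mu)%g ->
  exists p, phifam A mu x a b = idcast p.
Proof.
move=> e; exists (etrans (f_equal (fun c => fob (act A c) x) e) (actM_ob A b mu x)).
by rewrite /phifam; case: eqP => // e'; apply: hcast_pi.
Qed.

Lemma phifam_neq (mu : G) x a b : a != (b * mu)%g -> phifam A mu x a b = 0.
Proof. by rewrite /phifam; case: eqP. Qed.

Lemma phifam_ok (mu : G) x : ofamily_ok (phifam A mu x).
Proof.
split=> [a|b|g a b].
- apply: (finite_set_single (i0 := (a * mu^-1)%g)) => b ne /=.
  by rewrite phifam_neq ?eqxx //; apply: contraNneq ne => ->; rewrite mulgK.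
- by apply: (finite_set_single (i0 := (b * mu)%g)) => a ne /=; rewrite phifam_neq ?eqxx.
- have [e|ne] := eqVneq a (b * mu)%g.
    have [p ->] := phifam_idcast x e.
    have e' : (g * a = g * b * mu)%g by rewrite e mulgA.
    have [q ->] := phifam_idcast x e'.
    by rewrite hcast_idcast fhom_idcast; apply: idcast_pi.
  rewrite !phifam_neq ?hcast0 ?fhom0 // -mulgA.
  by rewrite (can_eq (mulKg g)).
Qed.

Lemma ofam_phican (mu : G) x : ofam (phican A mu x) = phifam A mu x.
Proof. exact/ofam_to_ohom/phifam_ok. Qed.

Definition psifam (mu : G) x : ofamily A (fob (act A mu) x) x :=
  fun a b =>
    match b =P (a * mu)%g with
    | ReflectT e =>
        idcast (etrans (esym (actM_ob A a mu x))
                       (f_equal (fun c => fob (act A c) x) (esym e)))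
    | ReflectF _ => 0
    end.

Lemma psifam_idcast (mu : G) x a b : b = (a * mu)%g ->
  exists p, psifam mu x a b = idcast p.
Proof.
move=> e; exists (etrans (esym (actM_ob A a mu x))
                         (f_equal (fun c => fob (act A c) x) (esym e))).
by rewrite /psifam; case: eqP => // e'; apply: idcast_pi.
Qed.

Lemma psifam_neq (mu : G) x a b : b != (a * mu)%g -> psifam mu x a b = 0.
Proof. by rewrite /psifam; case: eqP. Qed.

Lemma psifam_ok (mu : G) x : ofamily_ok (psifam mu x).
Proof.
split=> [a|b|g a b].
- by apply: (finite_set_single (i0 := (a * mu)%g)) => b ne /=; rewrite psifam_neq ?eqxx.
- apply: (finite_set_single (i0 := (b * mu^-1)%g)) => a ne /=.
  by rewrite psifam_neq ?eqxx //; apply: contraNneq ne => ->; rewrite mulgK.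
- have [e|ne] := eqVneq b (a * mu)%g.
    have [p ->] := psifam_idcast x e.
    have e' : (g * b = g * a * mu)%g by rewrite e mulgA.
    have [q ->] := psifam_idcast x e'.
    by rewrite hcast_idcast fhom_idcast; apply: idcast_pi.
  rewrite !psifam_neq ?hcast0 ?fhom0 // -mulgA.
  by rewrite (can_eq (mulKg g)).
Qed.

Definition psican (mu : G) x : ohom A (fob (act A mu) x) x := to_ohom (psifam mu x).

Lemma ofam_psican (mu : G) x : ofam (psican mu x) = psifam mu x.
Proof. exact/ofam_to_ohom/psifam_ok. Qed.

End OrbitFamilies.

Section OrbitComposition.
Variables (k : pzRingType) (G : groupType) (C : lincat k) (hC : lincat_laws C)
  (A : gcat G C).
Implicit Types x y z : lob C.

Lemma ocomp_terms_fin x y z (g : ohom A y z) (f : ohom A x y) a b :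
  finite_set (supp (fun c => lcomp (ofam g c b) (ofam f a c))).
Proof.
by apply: sub_finite_set (ofam_fin_row f a) => c /comp_neq0 [] // _ ? /=.
Qed.

Lemma ocomp_ok x y z (g : ohom A y z) (f : ohom A x y) :
  ofamily_ok (fun a b => \sum_(c \in [set: G]) lcomp (ofam g c b) (ofam f a c)).
Proof.
split=> [a|b|h a b].
- apply: (sub_finite_set (B := \bigcup_(c in [set c | ofam f a c != 0])
                                  [set b | ofam g c b != 0])).
    by move=> b /= /fsum_neq0 [c /comp_neq0 [] // gcb fac]; exists c.
  by apply: bigcup_finite => [|c _]; exact: ofam_fin_row.
- apply: (sub_finite_set (B := \bigcup_(c in [set c | ofam g c b != 0])
                                  [set a | ofam f a c != 0])).
    by move=> a /= /fsum_neq0 [c /comp_neq0 [] // gcb fac]; exists c.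
  by apply: bigcup_finite => [|c _]; exact: ofam_fin_col.
- rewrite (fsum_morph (hcast0 _ _) (hcastD _ _) (ocomp_terms_fin _ _ _ _)).
  rewrite (fsum_morph (fhom0 _ _ _) (@fhom_add _ _ _ _ _ _) (ocomp_terms_fin _ _ _ _)).
  rewrite (fsum_reindex _ h); apply: eq_fsbigr => c _.
  by rewrite (hcast_lcomp _ (actM_ob A h c y)) !ofam_equiv fhom_comp.
Qed.

Lemma ofam_ocomp x y z (g : ohom A y z) (f : ohom A x y) a b :
  ofam (ocomp g f) a b = \sum_(c \in [set: G]) lcomp (ofam g c b) (ofam f a c).
Proof. by rewrite ofam_to_ohom //; exact: ocomp_ok. Qed.

Lemma ocomp0m x y z (f : ohom A x y) : ocomp (0 : ohom A y z) f = 0.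
Proof.
by apply: ohom_ext => a b; rewrite ofam_ocomp fsbig1 // => c _; rewrite comp0m.
Qed.

Lemma ocompm0 x y z (g : ohom A y z) : ocomp g (0 : ohom A x y) = 0.
Proof.
by apply: ohom_ext => a b; rewrite ofam_ocomp fsbig1 // => c _; rewrite compm0.
Qed.

Lemma ofam_fsum x y (F : G -> ohom A x y) a b : finite_set (supp F) ->
  ofam (\sum_(i \in [set: G]) F i) a b = \sum_(i \in [set: G]) ofam (F i) a b.
Proof. exact: (fsum_morph (phi := fun h : ohom A x y => ofam h a b)). Qed.

Lemma Pmor_comp x y z (g : lhom C y z) (f : lhom C x y) :
  ocomp (Pmor A g) (Pmor A f) = Pmor A (lcomp g f).
Proof.
apply: ohom_ext => a b; rewrite ofam_ocomp !ofam_Pmor (fsum_single (i0 := a)).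
  have [<-|ne] := eqVneq a b; first by rewrite !Pfam_diag fhom_comp.
  by rewrite (Pfam_offdiag _ g) // (Pfam_offdiag _ (lcomp g f)) // comp0m.
by move=> c ne; rewrite (Pfam_offdiag _ f) 1?eq_sym // compm0.
Qed.

Lemma Pmor0 x y : Pmor A (0 : lhom C x y) = 0.
Proof.
apply: ohom_ext => a b; rewrite ofam_Pmor.
by have [<-|ne] := eqVneq a b; rewrite ?Pfam_diag ?fhom0 ?Pfam_offdiag.
Qed.

Lemma PmorD x y (f g : lhom C x y) : Pmor A (f + g) = Pmor A f + Pmor A g.
Proof.
apply: ohom_ext => a b /=; rewrite !ofam_Pmor.
by have [<-|ne] := eqVneq a b; rewrite ?Pfam_diag ?fhom_add ?Pfam_offdiag ?addr0.
Qed.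

Lemma PmorZ x y (c : k) (f : lhom C x y) : Pmor A (c *: f) = c *: Pmor A f.
Proof.
apply: ohom_ext => a b /=; rewrite !ofam_Pmor.
by have [<-|ne] := eqVneq a b; rewrite ?Pfam_diag ?fhom_scale ?Pfam_offdiag ?scaler0.
Qed.

End OrbitComposition.

Section OrbitCanonical.
Variables (k : pzRingType) (G : groupType) (C : lincat k) (hC : lincat_laws C)
  (A : gcat G C).
Implicit Types x y : lob C.

Lemma ofam_hcast x y y' (e : y = y') (f : ohom A x y) a b :
  ofam (@hcast _ (orbit_cat A) x x y y' erefl e f) a b
  = hcast erefl (f_equal (fob (act A b)) e) (ofam f a b).
Proof. by destruct e. Qed.

Lemma phican_nat x y (f : lhom C x y) (mu : G) :
  ocomp (phican A mu y) (Pmor A f)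
  = ocomp (Pmor A (fhom (act A mu) f)) (phican A mu x).
Proof.
apply: ohom_ext => a b; rewrite !ofam_ocomp // !ofam_Pmor !ofam_phican.
rewrite (fsum_single (i0 := a)); last first.
  by move=> c ne; rewrite (Pfam_offdiag _ f) 1?eq_sym // compm0.
rewrite [RHS](fsum_single (i0 := b)); last first.
  by move=> c ne; rewrite Pfam_offdiag // comp0m.
rewrite !Pfam_diag; have [e|ne] := eqVneq a (b * mu)%g; last first.
  by rewrite !phifam_neq // comp0m // compm0.
have [p ->] := phifam_idcast A y e; have [q ->] := phifam_idcast A x e.
subst a; rewrite comp_idcastl // comp_idcastr // -actM_hom hcast_trans.
exact: hcast_pi.
Qed.

Lemma psican_phican (mu : G) x :
  ocomp (psican A mu x) (phican A mu x) = Pmor A (lidm C x).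
Proof.
apply: ohom_ext => a b; rewrite ofam_ocomp // ofam_Pmor ofam_phican ofam_psican.
rewrite (fsum_single (i0 := (a * mu^-1)%g)); last first.
  move=> c ne; rewrite phifam_neq ?compm0 //.
  by apply: contraNneq ne => ->; rewrite mulgK.
have e : a = (a * mu^-1 * mu)%g by rewrite mulgVK.
have [p ->] := phifam_idcast A x e.
have [<-|ne] := eqVneq a b.
  have [q ->] := psifam_idcast A x e.
  by rewrite idcast_comp // idcast_id Pfam_diag fhom_id.
by rewrite psifam_neq ?comp0m ?Pfam_offdiag // -e eq_sym.
Qed.

Lemma phican_psican (mu : G) x :
  ocomp (phican A mu x) (psican A mu x) = Pmor A (lidm C (fob (act A mu) x)).
Proof.
apply: ohom_ext => a b; rewrite ofam_ocomp // ofam_Pmor ofam_phican ofam_psican.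
rewrite (fsum_single (i0 := (a * mu)%g)); last first.
  by move=> c ne; rewrite psifam_neq ?compm0.
have [p ->] := psifam_idcast A x (erefl (a * mu)%g).
have [<-|ne] := eqVneq a b.
  have [q ->] := phifam_idcast A x (erefl (a * mu)%g).
  by rewrite idcast_comp // idcast_id Pfam_diag fhom_id.
by rewrite phifam_neq ?comp0m ?Pfam_offdiag // (can_eq (mulgK mu)).
Qed.

Lemma phican1 x :
  @hcast _ (orbit_cat A) _ _ _ _ erefl (act1_ob A x) (phican A 1%g x)
  = Pmor A (lidm C x).
Proof.
apply: ohom_ext => a b; rewrite ofam_hcast ofam_Pmor ofam_phican.
have [<-|ne] := eqVneq a b.
  have [p ->] := phifam_idcast A x (esym (mulg1 a)).
  by rewrite hcast_idcast idcast_id Pfam_diag fhom_id.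
by rewrite phifam_neq ?hcast0 ?Pfam_offdiag // mulg1.
Qed.

Lemma phicanM (a b : G) x :
  @hcast _ (orbit_cat A) _ _ _ _ erefl (actM_ob A b a x) (phican A (b * a)%g x)
  = ocomp (phican A b (fob (act A a) x)) (phican A a x).
Proof.
apply: ohom_ext => c d; rewrite ofam_hcast ofam_ocomp // !ofam_phican.
rewrite (fsum_single (i0 := (c * a^-1)%g)); last first.
  move=> e ne; rewrite (@phifam_neq _ _ _ A a x c e) ?compm0 //.
  by apply: contraNneq ne => ->; rewrite mulgK.
have ea : c = (c * a^-1 * a)%g by rewrite mulgVK.
have [q ->] := phifam_idcast A x ea.
have [E|ne] := eqVneq c (d * (b * a))%g; last first.
  rewrite phifam_neq ?hcast0 // phifam_neq ?comp0m //.
  by apply: contraNneq ne => E; rewrite ea E mulgA.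
have [p ->] := phifam_idcast A x E.
have Eb : (c * a^-1 = d * b)%g by rewrite E mulgA mulgK.
have [r ->] := phifam_idcast A (fob (act A a) x) Eb.
by rewrite hcast_idcast idcast_comp //; apply: idcast_pi.
Qed.

Lemma ofam_decomp_term x y b (h : lhom C (fob (act A 1%g) x) (fob (act A b) y)) a c :
  ofam (ocomp (psican A b y) (ocomp (Pmor A h) (phican A 1%g x))) a c
  = lcomp (psifam A b y a c) (lcomp (fhom (act A a) h) (phifam A 1%g x a a)).
Proof.
rewrite ofam_ocomp // ofam_psican (fsum_single (i0 := a)); last first.
  move=> d ne; rewrite ofam_ocomp // fsbig1 ?compm0 // => e _.
  rewrite ofam_Pmor; have [->|ne'] := eqVneq e d.
    by rewrite ofam_phican phifam_neq ?compm0 // mulg1 eq_sym.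
  by rewrite Pfam_offdiag // comp0m.
rewrite ofam_ocomp // (fsum_single (i0 := a)).
  by rewrite ofam_Pmor Pfam_diag ofam_phican.
by move=> e ne; rewrite ofam_phican phifam_neq ?compm0 // mulg1 eq_sym.
Qed.

Lemma ohom_decomp_terms_fin x y (f : ohom A x y) :
  finite_set (supp (fun b =>
    ocomp (psican A b y) (ocomp (Pmor A (ofam f 1%g b)) (phican A 1%g x)))).
Proof.
apply: sub_finite_set (ofam_fin_row f 1%g) => b /=; apply: contraNN => /eqP ->.
by rewrite Pmor0 ocomp0m // ocompm0.
Qed.

Lemma ohom_decomp x y (f : ohom A x y) :
  f = \sum_(b \in [set: G])
        ocomp (psican A b y) (ocomp (Pmor A (ofam f 1%g b)) (phican A 1%g x)).
Proof.
apply: ohom_ext => a c; rewrite ofam_fsum; last exact: ohom_decomp_terms_fin.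
under eq_fsbigr do rewrite ofam_decomp_term.
rewrite (fsum_single (i0 := (a^-1 * c)%g)); last first.
  move=> b ne; rewrite psifam_neq ?comp0m //.
  by apply: contraNneq ne => ->; rewrite mulKg.
have ec : c = (a * (a^-1 * c))%g by rewrite mulVKg.
have [p ->] := psifam_idcast A y ec.
have [q ->] := phifam_idcast A x (esym (mulg1 a)).
have [p' [q' ->]] := ofam_shift f (esym (mulg1 a)) ec.
by rewrite comp_idcastr // comp_idcastl // hcast_trans; apply: hcast_pi.
Qed.

End OrbitCanonical.

Section Restriction.
Variables (k : pzRingType) (G : groupType) (C : lincat k) (hC : lincat_laws C)
  (A : gcat G C) (C' : lincat k) (hC' : lincat_laws C').
Implicit Types x y z : lob C.

Section RestrictFunctor.
Variable H : lfunctor (orbit_cat A) C'.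

Lemma restr_hom_id x : fhom H (Pmor A (lidm C x)) = lidm C' (fob H x).
Proof. exact: fhom_id. Qed.

Lemma restr_hom_comp x y z (g : lhom C y z) (f : lhom C x y) :
  fhom H (Pmor A (lcomp g f)) = lcomp (fhom H (Pmor A g)) (fhom H (Pmor A f)).
Proof. by rewrite -(Pmor_comp hC); exact: (fhom_comp H). Qed.

Lemma restr_homD x y (f g : lhom C x y) :
  fhom H (Pmor A (f + g)) = fhom H (Pmor A f) + fhom H (Pmor A g).
Proof. by rewrite PmorD; exact: (fhom_add H). Qed.

Lemma restr_homZ x y (c : k) (f : lhom C x y) :
  fhom H (Pmor A (c *: f)) = c *: fhom H (Pmor A f).
Proof. by rewrite PmorZ; exact: (fhom_scale H). Qed.

Definition restr_fun : lfunctor C C' :=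
  LFunctor restr_hom_id restr_hom_comp restr_homD restr_homZ.

Definition restr_adj (a : G) x :
  lhom C' (fob restr_fun x) (fob restr_fun (fob (act A a) x)) :=
  fhom H (phican A a x).

Lemma restr_adj_nat (a : G) x y (f : lhom C x y) :
  lcomp (restr_adj a y) (fhom restr_fun f)
  = lcomp (fhom restr_fun (fhom (act A a) f)) (restr_adj a x).
Proof.
by rewrite /restr_adj /= -!(fhom_comp H); congr (fhom H _); exact: phican_nat.
Qed.

Lemma restr_adj_iso (a : G) x :
  exists g : lhom C' (fob restr_fun (fob (act A a) x)) (fob restr_fun x),
    lcomp g (restr_adj a x) = lidm C' _ /\ lcomp (restr_adj a x) g = lidm C' _.
Proof.
exists (fhom H (psican A a x)); rewrite /restr_adj -!(fhom_comp H) -!(fhom_id H).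
by split; congr (fhom H _); [exact: psican_phican | exact: phican_psican].
Qed.

Lemma restr_adj1 x :
  hcast erefl (f_equal (fob restr_fun) (act1_ob A x)) (restr_adj 1%g x)
  = lidm C' (fob restr_fun x).
Proof.
by rewrite /restr_adj -(fhom_hcast H (erefl x)) phican1 //; exact: (fhom_id H).
Qed.

Lemma restr_adjM (a b : G) x :
  hcast erefl (f_equal (fob restr_fun) (actM_ob A b a x)) (restr_adj (b * a)%g x)
  = lcomp (restr_adj b (fob (act A a) x)) (restr_adj a x).
Proof.
by rewrite /restr_adj -(fhom_hcast H (erefl x)) phicanM //; exact: (fhom_comp H).
Qed.

Definition restr_invfun : invfun C' A :=
  InvFun restr_adj_nat restr_adj_iso restr_adj1 restr_adjM.

End RestrictFunctor.

Section RestrictNTrans.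
Variables (H H' : lfunctor (orbit_cat A) C') (eta : ntrans H H').

Definition restr_ntrans : ntrans (restr_fun H) (restr_fun H') :=
  @NTrans k C C' (restr_fun H) (restr_fun H') (ncomp eta)
    (fun x y f => nnat eta (Pmor A f)).

Definition restr_mor : invmor (restr_invfun H) (restr_invfun H') :=
  @InvMor k G C C' A (restr_invfun H) (restr_invfun H') restr_ntrans
    (fun a x => nnat eta (phican A a x)).

End RestrictNTrans.

Lemma restr_mor_id (H : lfunctor (orbit_cat A) C') :
  restr_mor (ntrans_id hC' H) = invmor_id hC' (restr_invfun H).
Proof. exact: invmor_ext. Qed.

Lemma restr_mor_comp (H1 H2 H3 : lfunctor (orbit_cat A) C')
  (e2 : ntrans H2 H3) (e1 : ntrans H1 H2) :
  restr_mor (ntrans_comp hC' e2 e1) = invmor_comp hC' (restr_mor e2) (restr_mor e1).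
Proof. exact: invmor_ext. Qed.

Definition restr_functor : functor (Funcat (orbit_cat A) hC') (Invcat A hC') :=
  @Functor (Funcat (orbit_cat A) hC') (Invcat A hC') restr_invfun restr_mor
    restr_mor_id restr_mor_comp.

End Restriction.

Section Extension.
Variables (k : pzRingType) (G : groupType) (C : lincat k) (hC : lincat_laws C)
  (A : gcat G C) (C' : lincat k) (hC' : lincat_laws C').
Implicit Types x y z : lob C.

Definition iadj_inv (F : invfun C' A) (a : G) x :
  lhom C' (fob (ifun F) (fob (act A a) x)) (fob (ifun F) x) :=
  projT1 (boolp.cid (iadj_iso F a x)).

Lemma iadjK (F : invfun C' A) a x : lcomp (iadj_inv F a x) (iadj F a x) = lidm C' _.
Proof. by rewrite /iadj_inv; case: boolp.cid => g []. Qed.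

Lemma iadj_invK (F : invfun C' A) a x : lcomp (iadj F a x) (iadj_inv F a x) = lidm C' _.
Proof. by rewrite /iadj_inv; case: boolp.cid => g []. Qed.

Section ExtendFunctor.
Variable F : invfun C' A.
Local Notation Fo := (fob (ifun F)).
Local Notation Fh := (fhom (ifun F)).

Definition ext_term x y (f : ohom A x y) (u v : G) : lhom C' (Fo x) (Fo y) :=
  lcomp (iadj_inv F v y) (lcomp (Fh (ofam f u v)) (iadj F u x)).

(* [f'], [psi'] and [psi''] are [g h], [phi_(g u)] and [phi_(g v)] up to the
   transports along [actM_ob]; their endpoints are left free so that the
   transports can be eliminated. *)
Lemma iadj_conj_transport x y (g u v : G)
  (h : lhom C (fob (act A u) x) (fob (act A v) y)) (X Y : lob C)
  (eX : X = fob (act A g) (fob (act A u) x)) (eY : Y = fob (act A g) (fob (act A v) y))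
  (f' : lhom C X Y) (psi' : lhom C' (Fo x) (Fo X)) (psi'' : lhom C' (Fo y) (Fo Y))
  (iota : lhom C' (Fo Y) (Fo y)) :
  hcast eX eY f' = fhom (act A g) h ->
  hcast erefl (f_equal Fo eX) psi' = lcomp (iadj F g _) (iadj F u x) ->
  hcast erefl (f_equal Fo eY) psi'' = lcomp (iadj F g _) (iadj F v y) ->
  lcomp iota psi'' = lidm C' _ ->
  lcomp iota (lcomp (Fh f') psi') = lcomp (iadj_inv F v y) (lcomp (Fh h) (iadj F u x)).
Proof.
subst X Y => /= -> -> -> iotaK.
have -> : iota = lcomp (iadj_inv F v y) (iadj_inv F g _).
  apply: (linv_rinv_eq hC' iotaK).
  rewrite -Defs.compA // [lcomp (iadj F v y) _]Defs.compA // iadj_invK.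
  by rewrite comp1m // iadj_invK.
have nat_g : lcomp (Fh (fhom (act A g) h)) (lcomp (iadj F g _) (iadj F u x))
    = lcomp (iadj F g _) (lcomp (Fh h) (iadj F u x)).
  by rewrite Defs.compA // -iadj_nat -Defs.compA.
by rewrite -Defs.compA // nat_g [lcomp (iadj_inv F g _) _]Defs.compA // iadjK comp1m.
Qed.

Lemma ext_term_shift x y (f : ohom A x y) (g u v : G) :
  ext_term f (g * u)%g (g * v)%g = ext_term f u v.
Proof.
apply: (iadj_conj_transport (eX := actM_ob A g u x) (eY := actM_ob A g v y)).
- exact: ofam_equiv.
- exact: iadjM.
- exact: iadjM.
- exact: iadjK.
Qed.

Lemma ext_term_fin x y (f : ohom A x y) u : finite_set (supp (ext_term f u)).
Proof.
apply: sub_finite_set (ofam_fin_row f u) => b /=; apply: contraNN => /eqP.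
by rewrite /ext_term => ->; rewrite fhom0 comp0m // compm0.
Qed.

Definition ext_hom x y (f : ohom A x y) : lhom C' (Fo x) (Fo y) :=
  \sum_(b \in [set: G]) ext_term f 1%g b.

Lemma ext_hom_row x y (f : ohom A x y) u :
  ext_hom f = \sum_(b \in [set: G]) ext_term f u b.
Proof.
rewrite [RHS](fsum_reindex _ u).
by apply: eq_fsbigr => b _; rewrite -{1}(mulg1 u) ext_term_shift.
Qed.

Lemma ext_hom_Pmor x y (f : lhom C x y) : ext_hom (Pmor A f) = Fh f.
Proof.
rewrite /ext_hom (fsum_single (i0 := 1%g)) => [|b ne].
  by rewrite /ext_term ofam_Pmor Pfam_diag -(iadj_nat F) Defs.compA // iadjK comp1m.
by rewrite /ext_term ofam_Pmor Pfam_offdiag 1?eq_sym // fhom0 comp0m // compm0.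
Qed.

Lemma ext_hom_id x : ext_hom (Pmor A (lidm C x)) = lidm C' (Fo x).
Proof. by rewrite ext_hom_Pmor fhom_id. Qed.

Lemma ext_term_comp x y z (g : ohom A y z) (f : ohom A x y) c d :
  lcomp (ext_term g c d) (ext_term f 1%g c)
  = lcomp (iadj_inv F d z)
      (lcomp (Fh (lcomp (ofam g c d) (ofam f 1%g c))) (iadj F 1%g x)).
Proof.
rewrite /ext_term fhom_comp -!Defs.compA //.
by rewrite [lcomp (iadj F c y) _]Defs.compA // iadj_invK comp1m.
Qed.

Lemma ext_hom_comp x y z (g : ohom A y z) (f : ohom A x y) :
  ext_hom (ocomp g f) = lcomp (ext_hom g) (ext_hom f).
Proof.
rewrite [ext_hom f]/ext_hom (comp_fsumr _ _ (ext_term_fin f 1%g)) //.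
under [RHS]eq_fsbigr => c _ do
  rewrite (ext_hom_row g c) (comp_fsuml _ _ (ext_term_fin g c)) //.
under [RHS]eq_fsbigr => c _ do under eq_fsbigr => d _ do rewrite ext_term_comp.
have finD : finite_set (\bigcup_(c in [set c | ofam f 1%g c != 0])
                          [set d | ofam g c d != 0]).
  by apply: bigcup_finite => [|c _]; exact: ofam_fin_row.
rewrite [RHS](fsum_exchange (ofam_fin_row f 1%g) finD); last first.
  move=> c d /comp_neq0 [] // _ /comp_neq0 [] // Fgf _.
  have : lcomp (ofam g c d) (ofam f 1%g c) != 0.
    by apply: contraNneq Fgf => ->; rewrite fhom0.
  by case/comp_neq0 => // gcd f1c; split=> //; exists c.
apply: eq_fsbigr => d _; rewrite /ext_term ofam_ocomp //.
pose conj h := lcomp (iadj_inv F d z) (lcomp (Fh h) (iadj F 1%g x)).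
apply: (fsum_morph (phi := conj)) => [|u v|]; rewrite /conj.
- by rewrite fhom0 comp0m // compm0.
- by rewrite fhom_add compDl // compDr.
- exact: ocomp_terms_fin.
Qed.

Lemma ext_homD x y (f g : ohom A x y) : ext_hom (f + g) = ext_hom f + ext_hom g.
Proof.
rewrite /ext_hom -(fsumD (ext_term_fin f 1%g) (ext_term_fin g 1%g)).
by apply: eq_fsbigr => b _; rewrite /ext_term /= fhom_add compDl // compDr.
Qed.

Lemma ext_homZ x y (c : k) (f : ohom A x y) : ext_hom (c *: f) = c *: ext_hom f.
Proof.
rewrite /ext_hom (fsum_morph (phi := fun h => c *: h) (scaler0 _ c) (scalerDr c)
  (ext_term_fin f 1%g)).
by apply: eq_fsbigr => b _; rewrite /ext_term /= fhom_scale compZl // compZr.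
Qed.

Definition ext_fun : lfunctor (orbit_cat A) C' :=
  @LFunctor k (orbit_cat A) C' Fo ext_hom
    ext_hom_id ext_hom_comp ext_homD ext_homZ.

End ExtendFunctor.

Section ExtendNTrans.
Variables (F F' : invfun C' A) (m : invmor F F').
Local Notation eta := (ncomp (imor m)).

Lemma iadj_inv_nat (b : G) y :
  lcomp (eta y) (iadj_inv F b y) = lcomp (iadj_inv F' b y) (eta (fob (act A b) y)).
Proof.
rewrite -[LHS](comp1m hC') -(iadjK F' b y) -Defs.compA //.
rewrite [lcomp (iadj F' b y) _]Defs.compA // -(imor_adj m).
by rewrite -Defs.compA // iadj_invK compm1.
Qed.

Lemma ext_term_nat x y (f : ohom A x y) u v :
  lcomp (eta y) (ext_term F f u v) = lcomp (ext_term F' f u v) (eta x).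
Proof.
rewrite /ext_term Defs.compA // iadj_inv_nat -!Defs.compA //; congr (lcomp _ _).
by rewrite -(imor_adj m) [RHS]Defs.compA // -(nnat (imor m)) Defs.compA.
Qed.

Lemma ext_hom_nat x y (f : ohom A x y) :
  lcomp (eta y) (ext_hom F f) = lcomp (ext_hom F' f) (eta x).
Proof.
rewrite /ext_hom (comp_fsumr _ _ (ext_term_fin F f 1%g)) //.
rewrite (comp_fsuml _ _ (ext_term_fin F' f 1%g)) //.
by apply: eq_fsbigr => b _; exact: ext_term_nat.
Qed.

Definition ext_ntrans : ntrans (ext_fun F) (ext_fun F') :=
  @NTrans k (orbit_cat A) C' (ext_fun F) (ext_fun F') eta ext_hom_nat.

End ExtendNTrans.

Lemma ext_ntrans_id (F : invfun C' A) :
  ext_ntrans (invmor_id hC' F) = ntrans_id hC' (ext_fun F).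
Proof. exact: ntrans_ext. Qed.

Lemma ext_ntrans_comp (F1 F2 F3 : invfun C' A) (m2 : invmor F2 F3) (m1 : invmor F1 F2) :
  ext_ntrans (invmor_comp hC' m2 m1) = ntrans_comp hC' (ext_ntrans m2) (ext_ntrans m1).
Proof. exact: ntrans_ext. Qed.

Definition ext_functor : functor (Invcat A hC') (Funcat (orbit_cat A) hC') :=
  @Functor (Invcat A hC') (Funcat (orbit_cat A) hC') ext_fun ext_ntrans
    ext_ntrans_id ext_ntrans_comp.

Lemma iadj_transport (F : invfun C' A) (u v : G) x (e : u = v) :
  iadj F v x
  = lcomp (fhom (ifun F) (idcast (f_equal (fun c => fob (act A c) x) e))) (iadj F u x).
Proof. by destruct e; rewrite idcast_id fhom_id comp1m. Qed.

Lemma ext_hom_phican (F : invfun C' A) (a : G) x :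
  ext_hom F (phican A a x) = iadj F a x.
Proof.
rewrite /ext_hom (fsum_single (i0 := a^-1%g)) => [|b ne]; last first.
  rewrite /ext_term ofam_phican phifam_neq ?fhom0 ?comp0m // ?compm0 //.
  by apply: contraNneq ne => /esym /mulg1_eq <-; rewrite invgK.
rewrite /ext_term ofam_phican; have [p ->] := phifam_idcast A x (esym (mulVg a)).
rewrite (iadj_transport F x (mulVg a)) [lcomp (fhom _ (idcast p)) _]Defs.compA //.
rewrite -fhom_comp idcast_comp // (idcast_pi _ (actM_ob A a^-1 a x)) fhom_idcast.
by rewrite comp_idcastl // (iadjM F) Defs.compA // iadjK comp1m.
Qed.

Lemma ext_hom_restr (H : lfunctor (orbit_cat A) C') x y (f : ohom A x y) :
  ext_hom (restr_invfun hC H) f = fhom H f.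
Proof.
have iadj_inv_restr b z : iadj_inv (restr_invfun hC H) b z = fhom H (psican A b z).
  apply: (linv_rinv_eq hC' (iadjK (restr_invfun hC H) b z)).
  rewrite /= /restr_adj -(fhom_comp H) -(fhom_id H); congr (fhom H _).
  exact: phican_psican.
rewrite [in RHS](ohom_decomp hC f).
rewrite (fsum_morph (fhom0 H x y) (@fhom_add _ _ _ H x y) (ohom_decomp_terms_fin hC f)).
apply: eq_fsbigr => b _.
by rewrite /ext_term iadj_inv_restr /= /restr_adj -!(fhom_comp H).
Qed.

Lemma ext_restr (H : lfunctor (orbit_cat A) C') : ext_fun (restr_invfun hC H) = H.
Proof.
apply: (@lfunctor_ext _ _ _ (ext_fun (restr_invfun hC H)) H (fun x => erefl)).
by move=> x y f; exact: ext_hom_restr.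
Qed.

Lemma restr_ext (F : invfun C' A) : restr_invfun hC (ext_fun F) = F.
Proof.
apply: (@invfun_ext _ _ _ _ _ (restr_invfun hC (ext_fun F)) F (fun x => erefl)).
  by move=> x y f; exact: ext_hom_Pmor.
by move=> a x; exact: ext_hom_phican.
Qed.

End Extension.

Theorem mainTheorem3 (k : comPzRingType) (G : groupType)
  (C : lincat k) (hC : lincat_laws C) (A : gcat G C)
  (C' : lincat k) (hC' : lincat_laws C') :
  exists (Phi : functor (Funcat (orbit_cat A) hC') (Invcat A hC'))
    (e : forall (H : lfunctor (orbit_cat A) C') (x : lob C),
           fob (ifun (Fob Phi H)) x = fob H x),
    [/\ (* on objects: H |-> (H P, H phi) *)
        (forall (H : lfunctor (orbit_cat A) C') (x y : lob C) (f : lhom C x y),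
           hcast (e H x) (e H y) (fhom (ifun (Fob Phi H)) f)
           = fhom H (Pmor A f)),
        (forall (H : lfunctor (orbit_cat A) C') (a : G) (x : lob C),
           hcast (e H x) (e H (fob (act A a) x)) (iadj (Fob Phi H) a x)
           = fhom H (phican A a x)),
        (* on morphisms: eta |-> eta P *)
        (forall (H H' : lfunctor (orbit_cat A) C') (eta : ntrans H H')
                (x : lob C),
           hcast (e H x) (e H' x) (ncomp (imor (Fhom Phi eta)) x)
           = ncomp eta x)
      & (* and it is an isomorphism of categories *)
        cat_iso Phi].
Proof.
exists (restr_functor hC A hC'), (fun H x => erefl); split=> //.
exists (ext_functor hC A hC'); split.
- exists (ext_restr hC hC') => H H' eta; apply: ntrans_ext => x.
  by rewrite ccast_ncomp hcast_id.
- exists (restr_ext hC hC') => F F' m; apply: invmor_ext => x.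
  by rewrite ccast_imor hcast_id.
Qed.
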